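(* Let $\mathcal{D}\subset Y\times Y$. The function $z\mapsto\operatorname{dist}(z,\mathcal{D})$ is $(p,q)$-coercive if and only if there are $c_1\in\mathbb{R}$ and $c_2>0$ such that $\mathcal{D}\subset\{(\epsilon,\tilde\sigma)\in Y\times Y: c_1\,\epsilon\cdot\tilde\sigma+c_2>|\epsilon|^p+|\tilde\sigma|^q\}$.
   Context: $1<p<\infty$, $q=p/(p-1)$, $Y=\{A\in\mathbb{R}^{d\times d}:A=A^T,\operatorname{tr}A=0\}$ with Frobenius product $\cdot$ and norm $|\cdot|$. $\operatorname{dist}((\epsilon,\tilde\sigma),\mathcal{D})=\inf_{(\epsilon',\tilde\sigma')\in\mathcal{D}}\big(\frac1p|\epsilon-\epsilon'|^p+\frac1q|\tilde\sigma-\tilde\sigma'|^q\big)$. A function $F:Y\times Y\to\mathbb{R}$ is $(p,q)$-coercive if there exist $C_1,C_2>0$, $\gamma\in\mathbb{R}$ with $F(\epsilon,\tilde\sigma)\ge C_1(|\epsilon|^p+|\tilde\sigma|^q)-C_2-\gamma\,\epsilon\cdot\tilde\sigma$ for all $(\epsilon,\tilde\sigma)$. *)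

From HB Require Import structures.
From mathcomp Require Import all_boot all_order all_algebra.
From mathcomp Require Import all_classical all_reals all_analysis.
Unset Printing Implicit Defensive.
Import Order.TTheory GRing.Theory Num.Theory.
Local Open Scope classical_set_scope.
Local Open Scope ring_scope.

Definition Ysym {R : realType} (d : nat) : set 'M[R]_d :=
  [set A | A^T = A /\ \tr A = 0].

Definition frob {R : realType} {d : nat} (A B : 'M[R]_d) : R :=
  \sum_(i < d) \sum_(j < d) A i j * B i j.
Definition frobn {R : realType} {d : nat} (A : 'M[R]_d) : R :=
  Num.sqrt (frob A A).

(* dist((e,s),D) = inf_{(e',s') in D} (1/p |e-e'|^p + 1/q |s-s'|^q),
   extended-real valued (= +oo when D is empty). *)
Definition distD {R : realType} {d : nat} (p q : R)
    (D : set ('M[R]_d * 'M[R]_d)) (z : 'M[R]_d * 'M[R]_d) : \bar R :=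
  ereal_inf [set ((p^-1 * (frobn (z.1 - w.1)) `^ p
                   + q^-1 * (frobn (z.2 - w.2)) `^ q)%:E) | w in D].

Definition pq_coercive {R : realType} {d : nat} (p q : R)
    (F : 'M[R]_d * 'M[R]_d -> \bar R) : Prop :=
  exists C1 C2 gamma : R, 0 < C1 /\ 0 < C2 /\
    forall e s : 'M[R]_d, Ysym d e -> Ysym d s ->
      ((C1 * ((frobn e) `^ p + (frobn s) `^ q) - C2 - gamma * frob e s)%:E
         <= F (e, s))%E.

From HB Require Import structures.
From mathcomp Require Import all_boot all_order all_algebra.
From mathcomp Require Import all_classical all_reals all_analysis.
From mathcomp Require Import ring lra.
Import Order.TTheory GRing.Theory Num.Theory.
Local Open Scope classical_set_scope.
Local Open Scope ring_scope.

(* If dist(., D) is coercive, it vanishes on D, and coercivity at the points of D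
   is the claimed bound.  Conversely, write (e, s) = (e' + a, s' + b) with
   (e', s') in D.  The triangle inequality, Cauchy-Schwarz and Young's inequality
   bound |e|^p + |s|^q and e'.s' - e.s by constants times |e'|^p, |s'|^q, |a|^p and
   |b|^q, where the cross terms a.s' and e'.b are split unevenly so that their
   |e'|^p, |s'|^q parts stay small.  A small multiple k of the strict inequality
   defining D absorbs the |e'|^p, |s'|^q terms, and what remains is dominated by
   |a|^p/p + |b|^q/q, whose infimum over D is the distance. *)

Section Frobenius.
Context {R : realType} {d : nat}.
Implicit Types A B C : 'M[R]_d.

Lemma frobC A B : frob A B = frob B A.
Proof. by apply: eq_bigr => i _; apply: eq_bigr => j _; rewrite mulrC. Qed.

Lemma frobDl A B C : frob (A + B) C = frob A C + frob B C.
Proof.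
rewrite /frob -big_split; apply: eq_bigr => i _.
by rewrite -big_split; apply: eq_bigr => j _; rewrite mxE mulrDl.
Qed.

Lemma frobDr A B C : frob A (B + C) = frob A B + frob A C.
Proof. by rewrite frobC frobDl !(frobC _ A). Qed.

Lemma frobZl (t : R) A B : frob (t *: A) B = t * frob A B.
Proof.
rewrite /frob mulr_sumr; apply: eq_bigr => i _.
by rewrite mulr_sumr; apply: eq_bigr => j _; rewrite mxE mulrA.
Qed.

Lemma frobZr (t : R) A B : frob A (t *: B) = t * frob A B.
Proof. by rewrite frobC frobZl frobC. Qed.

Lemma frobNl A B : frob (- A) B = - frob A B.
Proof. by rewrite -scaleN1r frobZl mulN1r. Qed.

Lemma frobNr A B : frob A (- B) = - frob A B.
Proof. by rewrite frobC frobNl frobC. Qed.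

Lemma frob0l B : frob 0 B = 0.
Proof. by rewrite -(scale0r (0 : 'M[R]_d)) frobZl mul0r. Qed.

Lemma frob_self_ge0 A : 0 <= frob A A.
Proof. by apply: sumr_ge0 => i _; apply: sumr_ge0 => j _; rewrite -expr2 sqr_ge0. Qed.

Lemma frob_self_eq0 A : frob A A = 0 -> A = 0.
Proof.
move=> AA0; apply/matrixP => i j; rewrite mxE.
have sq_ge0 k l : 0 <= A k l * A k l by rewrite -expr2 sqr_ge0.
have row_i0 := psumr_eq0P (fun k _ => sumr_ge0 _ (fun l _ => sq_ge0 k l)) AA0 (i := i) isT.
have /eqP := psumr_eq0P (fun l _ => sq_ge0 i l) row_i0 (i := j) isT.
by rewrite mulf_eq0 orbb => /eqP.
Qed.

Lemma frobn_ge0 A : 0 <= frobn A.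
Proof. exact: sqrtr_ge0. Qed.

Lemma frobn0 : frobn (0 : 'M[R]_d) = 0.
Proof. by rewrite /frobn frob0l sqrtr0. Qed.

Lemma frobnN A : frobn (- A) = frobn A.
Proof. by rewrite /frobn frobNl frobNr opprK. Qed.

Lemma frobn_sqr A : frobn A ^+ 2 = frob A A.
Proof. by rewrite sqr_sqrtr // frob_self_ge0. Qed.

Lemma frobn_gt0 A : A != 0 -> 0 < frobn A.
Proof.
move=> A0; rewrite sqrtr_gt0 lt_def frob_self_ge0 andbT.
exact: contra_neq (@frob_self_eq0 A) A0.
Qed.

Lemma frob_le_frobn A B : frob A B <= frobn A * frobn B.
Proof.
have [->|A0] := eqVneq A 0; first by rewrite frob0l frobn0 mul0r.
have [->|B0] := eqVneq B 0; first by rewrite frobC frob0l frobn0 mulr0.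
have ab_gt0 := mulr_gt0 (frobn_gt0 _ A0) (frobn_gt0 _ B0).
have := frob_self_ge0 (frobn B *: A - frobn A *: B).
rewrite frobDl !frobDr !frobNl !frobNr !frobZl !frobZr (frobC B A) -!frobn_sqr => h.
by rewrite -(ler_pM2l ab_gt0); lra.
Qed.

Lemma ler_norm_frob A B : `|frob A B| <= frobn A * frobn B.
Proof.
rewrite ler_norml frob_le_frobn andbT lerNl -frobNl -frobnN.
exact: frob_le_frobn.
Qed.

Lemma ler_frobnD A B : frobn (A + B) <= frobn A + frobn B.
Proof.
rewrite -ler_sqr ?nnegrE ?addr_ge0 ?frobn_ge0 //.
rewrite frobn_sqr frobDl !frobDr (frobC B A) sqrrD !frobn_sqr.
have := frob_le_frobn A B; lra.
Qed.

End Frobenius.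

Lemma distD_le0 {R : realType} {d : nat} {p q : R} {D : set ('M[R]_d * 'M[R]_d)} {z} :
  0 < p -> 0 < q -> D z -> (distD p q D z <= 0)%E.
Proof.
move=> p_gt0 q_gt0 Dz; apply: ereal_inf_lbound; exists z => //.
by rewrite !subrr frobn0 !powR0 ?gt_eqF // !mulr0 addr0.
Qed.

Lemma powRD_le {R : realType} {s x y : R} : 0 <= s -> 0 <= x -> 0 <= y ->
  (x + y) `^ s <= 2 `^ s * (x `^ s + y `^ s).
Proof.
move=> s0 x0 y0; wlog xy : x y x0 y0 / x <= y.
  move=> le_xy; have [|/ltW] := leP x y; first exact: le_xy.
  by rewrite addrC (addrC (x `^ s)); apply: le_xy.
apply: (@le_trans _ _ ((2 * y) `^ s)).
  by apply: ge0_ler_powR; rewrite ?nnegrE; lra.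
by rewrite powRM // ler_wpM2l ?powR_ge0 // lerDr powR_ge0.
Qed.

Section ConjugateExponents.
Context {R : realType} {p q : R} (p_gt1 : 1 < p) (pq : q = p / (p - 1)).

Lemma conj_subr1 : q - 1 = (p - 1)^-1.
Proof. by rewrite pq; field; rewrite subr_eq0 gt_eqF. Qed.

Lemma conj_gt1 : 1 < q.
Proof. by rewrite -subr_gt0 conj_subr1 invr_gt0 subr_gt0. Qed.

Let p_gt0 : 0 < p := lt_trans ltr01 p_gt1.
Let q_gt0 : 0 < q := lt_trans ltr01 conj_gt1.

Lemma young_le {x y : R} : 0 <= x -> 0 <= y -> x * y <= x `^ p + y `^ q.
Proof.
move=> x0 y0.
have [le_yx|lt_xy] := leP y (x `^ (p - 1)).
  apply: (@le_trans _ _ (x `^ p)); last by rewrite lerDl powR_ge0.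
  by rewrite -mulr_powRB1 // ler_wpM2l.
apply: (@le_trans _ _ (y `^ q)); last by rewrite lerDr powR_ge0.
rewrite mulrC -mulr_powRB1 // ler_wpM2l //.
(* t |-> t `^ (p - 1) and t |-> t `^ (q - 1) are inverse, as (p - 1) (q - 1) = 1 *)
have -> : x = (x `^ (p - 1)) `^ (q - 1).
  by rewrite -powRrM conj_subr1 mulfV ?powRr1 // gt_eqF // subr_gt0.
by rewrite ge0_ler_powR ?nnegrE ?powR_ge0 ?(ltW lt_xy) // subr_ge0 ltW // conj_gt1.
Qed.

Lemma young_scaled_le {x y r : R} : 0 <= x -> 0 <= y -> 0 < r ->
  x * y <= r `^ p * x `^ p + r^-1 `^ q * y `^ q.
Proof.
move=> x0 y0 r_gt0; have ri_ge0 : 0 <= r^-1 by rewrite invr_ge0 ltW.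
have := young_le (mulr_ge0 (ltW r_gt0) x0) (mulr_ge0 ri_ge0 y0).
by rewrite !powRM // ?(ltW r_gt0) // mulrACA mulfV ?gt_eqF // mul1r.
Qed.

Lemma cross_terms_le {M : R} : 0 <= M ->
  exists2 W : R, 0 <= W & forall x y u v : R, 0 <= x -> 0 <= y -> 0 <= u -> 0 <= v ->
    M * (u * y + x * v + u * v) <= (x `^ p + y `^ q) / 2 + W * (u `^ p + v `^ q).
Proof.
move=> M0; have q_gt1 := conj_gt1; set r := 2 * M + 1.
have r_gt0 : 0 < r by rewrite /r; lra.
have ri_gt0 : 0 < r^-1 by rewrite invr_gt0.
have small s : 1 <= s -> M * r^-1 `^ s <= 1 / 2.
  move=> s1; apply: (@le_trans _ _ (M / r)).
    by rewrite ler_wpM2l // ge1r_powR // ri_gt0 invf_le1 // /r; lra.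
  by rewrite ler_pdivrMr // /r; lra.
exists (M * (r `^ p + r `^ q + 1)) => [|x y u v x0 y0 u0 v0].
  by rewrite mulr_ge0 // !addr_ge0 ?powR_ge0.
have uy := young_scaled_le u0 y0 r_gt0.
have := young_scaled_le x0 v0 ri_gt0; rewrite invrK => xv.
have uv := young_le u0 v0.
have := ler_wpM2l M0 (lerD (lerD uy xv) uv).
have := ler_wpM2r (powR_ge0 y q) (small q (ltW q_gt1)).
have := ler_wpM2r (powR_ge0 x p) (small p (ltW p_gt1)).
have := mulr_ge0 M0 (mulr_ge0 (powR_ge0 r p) (powR_ge0 v q)).
have := mulr_ge0 M0 (mulr_ge0 (powR_ge0 r q) (powR_ge0 u p)).
lra.
Qed.

Lemma powR_coercive_estimate {M : R} : 0 <= M ->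
  exists C1 k : R, [/\ 0 < C1, 0 < k & forall x y u v : R,
    0 <= x -> 0 <= y -> 0 <= u -> 0 <= v ->
    C1 * ((x + u) `^ p + (y + v) `^ q) + k * M * (u * y + x * v + u * v)
      <= p^-1 * u `^ p + q^-1 * v `^ q + k * (x `^ p + y `^ q)].
Proof.
move=> M0; have [W W0 cross] := cross_terms_le M0.
set m := Num.min p^-1 q^-1; set T := 2 `^ p + 2 `^ q.
have m_gt0 : 0 < m by rewrite lt_min !invr_gt0 p_gt0.
have T_gt0 : 0 < T by rewrite addr_gt0 ?powR_gt0.
(* k (1/2 + W) = m/2 bounds the coefficients of u^p and v^q, and C1 T = k/2 *)
set k := m / (2 * W + 1); have k_gt0 : 0 < k by rewrite divr_gt0 //; lra.
set C1 := k / (2 * T); have C1_gt0 : 0 < C1 by rewrite divr_gt0 // mulr_gt0.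
exists C1, k; split => // x y u v x0 y0 u0 v0.
have sum_le : (x + u) `^ p + (y + v) `^ q <= T * (x `^ p + u `^ p + y `^ q + v `^ q).
  have := powRD_le (ltW p_gt0) x0 u0; have := powRD_le (ltW q_gt0) y0 v0.
  have := mulr_ge0 (powR_ge0 2 q) (addr_ge0 (powR_ge0 x p) (powR_ge0 u p)).
  have := mulr_ge0 (powR_ge0 2 p) (addr_ge0 (powR_ge0 y q) (powR_ge0 v q)).
  rewrite /T; lra.
have := ler_wpM2l (ltW k_gt0) (cross x y u v x0 y0 u0 v0).
have := ler_wpM2l (ltW C1_gt0) sum_le.
have -> : C1 * (T * (x `^ p + u `^ p + y `^ q + v `^ q))
    = k / 2 * (x `^ p + u `^ p + y `^ q + v `^ q).
  by rewrite /C1; field; rewrite gt_eqF.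
have kW : k / 2 + k * W = m / 2 by rewrite /k; field; rewrite gt_eqF //; lra.
have eu : (k / 2 + k * W) * u `^ p = m / 2 * u `^ p by rewrite kW.
have ev : (k / 2 + k * W) * v `^ q = m / 2 * v `^ q by rewrite kW.
have m_le_p : m <= p^-1 by rewrite ge_min lexx.
have m_le_q : m <= q^-1 by rewrite ge_min lexx orbT.
have := ler_wpM2r (powR_ge0 u p) m_le_p; have := ler_wpM2r (powR_ge0 v q) m_le_q.
have := mulr_ge0 (ltW m_gt0) (powR_ge0 u p); have := mulr_ge0 (ltW m_gt0) (powR_ge0 v q).
lra.
Qed.

Lemma frob_coercive_estimate {d : nat} (c1 : R) :
  exists C1 k : R, [/\ 0 < C1, 0 < k & forall e' a s' b : 'M[R]_d,
    C1 * (frobn (e' + a) `^ p + frobn (s' + b) `^ q) - k * c1 * frob (e' + a) (s' + b)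
      <= p^-1 * frobn a `^ p + q^-1 * frobn b `^ q
         + k * (frobn e' `^ p + frobn s' `^ q - c1 * frob e' s')].
Proof.
have [C1 [k [C1_gt0 k_gt0 est]]] := powR_coercive_estimate (normr_ge0 c1).
exists C1, k; split => // e' a s' b.
have le_e : frobn (e' + a) `^ p <= (frobn e' + frobn a) `^ p.
  by rewrite ge0_ler_powR ?nnegrE ?addr_ge0 ?frobn_ge0 ?ler_frobnD ?ltW.
have le_s : frobn (s' + b) `^ q <= (frobn s' + frobn b) `^ q.
  by rewrite ge0_ler_powR ?nnegrE ?addr_ge0 ?frobn_ge0 ?ler_frobnD ?ltW.
have cross : c1 * (frob e' s' - frob (e' + a) (s' + b))
    <= `|c1| * (frobn a * frobn s' + frobn e' * frobn b + frobn a * frobn b).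
  have -> : frob e' s' - frob (e' + a) (s' + b) = - (frob a s' + frob e' b + frob a b).
    by rewrite frobDl !frobDr; ring.
  apply: le_trans (ler_norm _) _; rewrite normrM normrN ler_wpM2l //.
  apply: le_trans (ler_normD _ _) _; apply: lerD; last exact: ler_norm_frob.
  by apply: le_trans (ler_normD _ _) _; apply: lerD; exact: ler_norm_frob.
have := est _ _ _ _ (frobn_ge0 e') (frobn_ge0 s') (frobn_ge0 a) (frobn_ge0 b).
have := ler_wpM2l (ltW C1_gt0) (lerD le_e le_s).
have := ler_wpM2l (ltW k_gt0) cross.
lra.
Qed.

End ConjugateExponents.

Theorem lemma5p9 (R : realType) (d : nat) (p q : R)
    (hp : 1 < p) (hq : q = p / (p - 1))
    (D : set ('M[R]_d * 'M[R]_d))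
    (hD : D `<=` [set z | Ysym d z.1 /\ Ysym d z.2]) :
  pq_coercive p q (distD p q D) <->
  exists c1 c2 : R, 0 < c2 /\
    D `<=` [set z | Ysym d z.1 /\ Ysym d z.2 /\
                    (frobn z.1) `^ p + (frobn z.2) `^ q < c1 * frob z.1 z.2 + c2].
Proof.
have p_gt0 : 0 < p by lra.
have q_gt0 : 0 < q by have := conj_gt1 hp hq; lra.
split.
- move=> [C1 [C2 [g [C1_gt0 [C2_gt0 coercive]]]]].
  exists (g / C1), (C2 / C1 + 1); split; first by rewrite addr_gt0 ?divr_gt0.
  move=> [e s] Dz; have [Ye Ys] := hD _ Dz; do !split => //=.
  have := le_trans (coercive e s Ye Ys) (distD_le0 p_gt0 q_gt0 Dz).
  rewrite lee_fin => le0; rewrite -(ltr_pM2l C1_gt0).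
  have -> : C1 * (g / C1 * frob e s + (C2 / C1 + 1)) = g * frob e s + C2 + C1.
    by field; rewrite gt_eqF.
  lra.
- move=> [c1 [c2 [c2_gt0 inD]]].
  have [C1 [k [C1_gt0 k_gt0 est]]] := frob_coercive_estimate hp hq (d := d) c1.
  exists C1, (k * c2), (k * c1); do !split => //; first exact: mulr_gt0.
  move=> e s _ _; apply: le_ereal_inf_tmp => _ [[e' s'] Dw <-]; rewrite lee_fin /=.
  have [_ [_ /= ltD]] := inD _ Dw.
  have := est e' (e - e') s' (s - s'); rewrite !subrKC.
  have kltD : k * (frobn e' `^ p + frobn s' `^ q) < k * (c1 * frob e' s' + c2).
    by rewrite ltr_pM2l.
  lra.
Qed.
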